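(* Let $G=\operatorname{SL}(V)$ with $\dim V=n\ge2$. Then: (i) $b_V$ is alternating; (ii) if $n$ is even, $b_V$ is non-degenerate and $\operatorname{Ker}\psi_V=\langle\gamma_V\rangle^\perp$; (iii) if $n$ is odd, the radical of $b_V$ is $\langle\gamma_V\rangle$ and $V\otimes V^*=\operatorname{Ker}\psi_V\oplus\langle\gamma_V\rangle$; (iv) $\langle\gamma_V\rangle^\perp/\langle\gamma_V\rangle\cong L_G(\varpi_1+\varpi_{n-1})$ as $G$-modules.
   Context: $K$ is an algebraically closed field of characteristic 2. $\psi_V:V\otimes V^*\to K$ is $\psi_V(v\otimes f)=f(v)$. The form $b_V$ on $V\otimes V^*$ is $b_V(v\otimes f,v'\otimes f')=f(v')f'(v)+f(v)f'(v')$, which is $G$-invariant. For a basis $e_1,\dots,e_n$ of $V$ with dual basis $e_i^*$, $\gamma_V=\sum_i e_i\otimes e_i^*$ (independent of the basis). Perps are with respect to $b_V$. $L_G(\lambda)$ is the irreducible rational $G$-module of highest weight $\lambda$, fundamental weights labelled as in Bourbaki. *)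

(* Model: V = K^n (column vectors, basis e_1..e_n), V* = row vectors via the dual
   basis, and V (x) V* is identified with n x n matrices via v (x) f |-> v f^T.
   Under this (canonical) identification:
     psi_V(X) = tr X,   gamma_V = identity matrix,
     b_V(X,Y) = tr X * tr Y + tr (X Y)   (the bilinear extension of
        b_V(v(x)f, v'(x)f') = f(v')f'(v) + f(v)f'(v')),
     and g in SL(V) acts on V (x) V* by X |-> g X g^{-1}. *)
From HB Require Import structures.
From mathcomp Require Import all_boot all_order all_algebra.
Set Implicit Arguments. Unset Strict Implicit. Unset Printing Implicit Defensive.
Import Order.TTheory GRing.Theory.
Local Open Scope ring_scope.

Definition psiV {K : fieldType} {n : nat} (X : 'M[K]_n) : K := \tr X.

Definition bV {K : fieldType} {n : nat} (X Y : 'M[K]_n) : K :=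
  \tr X * \tr Y + \tr (X *m Y).

Definition gammaV (K : fieldType) (n : nat) : 'M[K]_n := 1%:M.

Definition in_span_gamma {K : fieldType} {n : nat} (X : 'M[K]_n) : Prop :=
  exists c : K, X = c *: gammaV K n.

Definition in_perp_gamma {K : fieldType} {n : nat} (X : 'M[K]_n) : Prop :=
  forall Y : 'M[K]_n, in_span_gamma Y -> bV X Y = 0.

Definition in_radical {K : fieldType} {n : nat} (X : 'M[K]_n) : Prop :=
  forall Y : 'M[K]_n, bV X Y = 0.

Definition bV_alternating (K : fieldType) (n : nat) : Prop :=
  forall X : 'M[K]_n, bV X X = 0.

Definition bV_nondegenerate (K : fieldType) (n : nat) : Prop :=
  forall X : 'M[K]_n, in_radical X -> X = 0.

Definition actG {K : fieldType} {n : nat} (g X : 'M[K]_n) : 'M[K]_n :=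
  g *m X *m invmx g.

Definition in_SL {K : fieldType} {n : nat} (g : 'M[K]_n) : Prop := \det g = 1.

Definition is_subspace {K : fieldType} {n : nat} (W : 'M[K]_n -> Prop) : Prop :=
  W 0 /\ forall (a : K) (X Y : 'M[K]_n), W X -> W Y -> W (a *: X + Y).

Definition G_stable {K : fieldType} {n : nat} (W : 'M[K]_n -> Prop) : Prop :=
  forall g X : 'M[K]_n, in_SL g -> W X -> W (actG g X).

(* The G-module Q := <gamma>^perp / <gamma> is irreducible (nonzero, and the only
   G-submodules of Q are 0 and Q, i.e. the only G-stable subspaces W with
   <gamma> <= W <= <gamma>^perp are <gamma> and <gamma>^perp). *)
Definition quotient_irreducible (K : fieldType) (n : nat) : Prop :=
  (exists X : 'M[K]_n, in_perp_gamma X /\ ~ in_span_gamma X) /\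
  forall W : 'M[K]_n -> Prop, is_subspace W -> G_stable W ->
    (forall X, in_span_gamma X -> W X) -> (forall X, W X -> in_perp_gamma X) ->
    (forall X, W X -> in_span_gamma X) \/ (forall X, in_perp_gamma X -> W X).

(* Upper unitriangular matrices: the unipotent radical U of the Borel subgroup B
   of upper triangular matrices of SL_n (Bourbaki conventions). *)
Definition upper_unitriangular {K : fieldType} {n : nat} (u : 'M[K]_n) : Prop :=
  (forall i j : 'I_n, (j < i)%N -> u i j = 0) /\ (forall i : 'I_n, u i i = 1).

(* Q has a nonzero vector (class of X) fixed by U on which the maximal torus
   T = {diag(d_1..d_n) | prod d_i = 1} acts by the weight
   varpi_1 + varpi_{n-1} : diag(d) |-> d_1 * d_n^{-1}. *)
Definition quotient_highest_weight_w1_wn1 (K : fieldType) (n : nat) : Prop :=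
  exists X : 'M[K]_n, in_perp_gamma X /\ ~ in_span_gamma X /\
    (forall u : 'M[K]_n, upper_unitriangular u ->
        in_span_gamma (actG u X - X)) /\
    (forall d : 'I_n -> K, \prod_(i < n) d i = 1 ->
       forall i0 iN : 'I_n, val i0 = 0%N -> val iN = n.-1 ->
        in_span_gamma (actG (diag_mx (\row_i d i)) X - (d i0 / d iN) *: X)).

(* <gamma>^perp / <gamma> is isomorphic to L_G(varpi_1 + varpi_{n-1}):
   it is the irreducible G-module with highest weight varpi_1 + varpi_{n-1}. *)
Definition quotient_iso_L_w1_wn1 (K : fieldType) (n : nat) : Prop :=
  quotient_irreducible K n /\ quotient_highest_weight_w1_wn1 K n.

From HB Require Import structures.
From mathcomp Require Import all_boot all_order all_algebra all_fingroup.
From Stdlib Require Import Classical.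
Set Implicit Arguments. Unset Strict Implicit. Unset Printing Implicit Defensive.
Import Order.TTheory GRing.Theory.
Local Open Scope ring_scope.

(* The proof has three layers.
   - Matrix-unit calculus over a commutative ring: products and traces with the
     elementary matrices E_ij, transvections t = 1 + a E_ij and the identity
     t X t - X = a (E_ij X + X E_ij) + a^2 X_ji E_ij, permutation conjugation.
   - Characteristic 2: tr (X^2) = (tr X)^2 (off-diagonal terms cancel in pairs),
     hence (i); b_V(X, c 1) = (n + 1) c tr X and b_V(X, E_ji) = X_ij + tr X d_ij,
     which describe <gamma>^perp and the radical and give (ii) and (iii).
   - Irreducibility (iv): a G-stable subspace W with <gamma> <= W and W not
     inside <gamma> contains some E_ij (i <> j) by the transvection identity
     (using c <> 0, 1 from algebraic closure), then all E_kl and E_kk + E_ll by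
     permutations, hence all trace-zero matrices, hence <gamma>^perp.  The
     highest-weight vector is the corner matrix E_0n, fixed by the unipotent
     upper triangular group and scaled by d_0 / d_n under the torus. *)

Section MatrixUnits.
Variable R : comNzRingType.
Variable n : nat.
Implicit Types (X : 'M[R]_n) (i j k l : 'I_n).

Lemma mul_delta_mxE i j X k l :
  (delta_mx i j *m X) k l = (k == i)%:R * X j l.
Proof.
rewrite !mxE (bigD1 j) //= big1 ?addr0 => [|m /negbTE nm]; rewrite !mxE ?nm.
  by rewrite eqxx andbT.
by rewrite andbF mul0r.
Qed.

Lemma mul_mx_deltaE X i j k l :
  (X *m delta_mx i j) k l = X k i * (l == j)%:R.
Proof.
rewrite !mxE (bigD1 i) //= big1 ?addr0 => [|m /negbTE nm]; rewrite !mxE ?nm.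
  by rewrite eqxx.
by rewrite mulr0.
Qed.

Lemma mxtrace_mul_delta X i j : \tr (X *m delta_mx j i) = X i j.
Proof.
rewrite /mxtrace (bigD1 i) //= big1 ?addr0 => [|m /negbTE nm];
  rewrite mul_mx_deltaE ?nm ?eqxx ?mulr1 //.
by rewrite mulr0.
Qed.

Lemma mxtrace_delta i j : \tr (delta_mx i j : 'M[R]_n) = (i == j)%:R.
Proof. by rewrite -[delta_mx i j]mul1mx mxtrace_mul_delta mxE eq_sym. Qed.

(* E_ij X E_ij = X_ji E_ij: the quadratic term of transvection conjugation. *)
Lemma delta_mx_sandwich X i j :
  delta_mx i j *m X *m delta_mx i j = X j i *: delta_mx i j.
Proof.
apply/matrixP => k l; rewrite mul_mx_deltaE mul_delta_mxE !mxE.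
by case: (k == i); case: (l == j); rewrite ?mulr0 ?mul0r ?mulr1 ?mul1r.
Qed.

Definition transvection (a : R) i j : 'M[R]_n := 1%:M + a *: delta_mx i j.

Lemma transvectionD a b i j : i != j ->
  transvection a i j *m transvection b i j = transvection (a + b) i j.
Proof.
move=> nij; rewrite /transvection mulmxDl !mulmxDr !mul1mx mulmx1.
rewrite -scalemxAl -scalemxAr mul_delta_mx_cond eq_sym (negbTE nij).
by rewrite mulr0n !scaler0 addr0 scalerDl addrA addrAC.
Qed.

(* Conjugation by t, written with t in place of t^-1 (as in characteristic 2). *)
Lemma transvection_conj a i j X :
  transvection a i j *m X *m transvection a i j - X =
  a *: (delta_mx i j *m X + X *m delta_mx i j) + (a ^+ 2 * X j i) *: delta_mx i j.
Proof.
rewrite /transvection !mulmxDl !mulmxDr !mul1mx !mulmx1 -!scalemxAl -!scalemxAr.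
rewrite delta_mx_sandwich scalerDr scalerA -expr2 -scalerA addrC !addrA addNr add0r.
by congr (_ + _); rewrite addrC.
Qed.

Lemma perm_mx_conj (s : 'S_n) X :
  perm_mx s *m X *m perm_mx s^-1 = \matrix_(k, l) X (s k) (s l).
Proof. by rewrite -row_permE -col_permE; apply/matrixP => k l; rewrite !mxE. Qed.

End MatrixUnits.

Lemma perm_map_pair (T : finType) (k l i j : T) : k != l -> i != j ->
  exists s : {perm T}, s k = i /\ s l = j.
Proof.
move=> nkl nij; pose l' := tperm k i l.
have nil' : i != l'.
  by rewrite /l' -{1}(tpermL k i) (inj_eq (@perm_inj _ _)).
exists (tperm k i * tperm l' j)%g; rewrite !permM tpermL; split.
  by rewrite tpermD // eq_sym.
by rewrite -/l' tpermL.
Qed.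

Lemma invmx_right (R : comUnitRingType) n (A B : 'M[R]_n) :
  A *m B = 1%:M -> invmx A = B.
Proof.
move=> AB; have [uA _] := mulmx1_unit AB.
by rewrite -[invmx A]mulmx1 -AB mulmxA mulVmx // mul1mx.
Qed.

Lemma bV_sym (K : fieldType) n (X Y : 'M[K]_n) : bV X Y = bV Y X.
Proof. by rewrite /bV mulrC mxtrace_mulC. Qed.

Lemma bV_delta (K : fieldType) n (X : 'M[K]_n) i j :
  bV X (delta_mx j i) = X i j + \tr X * (i == j)%:R.
Proof. by rewrite /bV mxtrace_mul_delta mxtrace_delta eq_sym addrC. Qed.

Lemma bV_gamma (K : fieldType) n (X : 'M[K]_n) c :
  bV X (c *: gammaV K n) = (c * \tr X) *+ n.+1.
Proof.
rewrite /bV /gammaV scalemx1 mxtrace_scalar mul_mx_scalar mxtraceZ.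
by rewrite mulrSr mulrnAr [\tr X * c]mulrC.
Qed.

Section Char2.
Variable K : fieldType.
Hypothesis hK : (2 \in [pchar K])%N.

Lemma natr_pchar2 m : (m%:R : K) = (odd m)%:R.
Proof.
by rewrite -{1}(odd_double_half m) natrD -muln2 natrM (pcharf0 hK) mulr0 addr0.
Qed.

Lemma sum_sym_pchar2 m (F : 'I_m -> 'I_m -> K) :
  (forall i j, F i j = F j i) -> \sum_i \sum_j F i j = \sum_i F i i.
Proof.
move=> Fsym.
have -> : \sum_i \sum_j F i j =
    \sum_i F i i + \sum_(i < m) \sum_(j < m | (j < i)%N) F i j
                 + \sum_(i < m) \sum_(j < m | (i < j)%N) F i j.
  rewrite -!big_split /=; apply: eq_bigr => i _.
  rewrite (bigD1 i) //= (bigID (fun j : 'I_m => (j < i)%N)) /= addrA.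
  by congr (_ + _ + _); apply: eq_bigl => j; rewrite -val_eqE /=; case: ltngtP.
have -> : \sum_(i < m) \sum_(j < m | (j < i)%N) F i j =
          \sum_(i < m) \sum_(j < m | (i < j)%N) F i j.
  rewrite (exchange_big_dep predT) //=.
  by apply: eq_bigr => i _; apply: eq_bigr => j _; rewrite Fsym.
by rewrite -addrA addrr_pchar2 // addr0.
Qed.

(* Hence tr (X^2) = sum_ij X_ij X_ji = sum_i X_ii^2 = (tr X)^2. *)
Lemma mxtrace_sqr_pchar2 n (X : 'M[K]_n) : \tr (X *m X) = \tr X ^+ 2.
Proof.
have -> : \tr (X *m X) = \sum_i \sum_j X i j * X j i.
  by apply: eq_bigr => i _; rewrite mxE.
rewrite expr2 /mxtrace mulr_suml.
rewrite [RHS](eq_bigr (fun i => \sum_j X i i * X j j)) => [|i _]; last first.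
  by rewrite mulr_sumr.
by rewrite !sum_sym_pchar2 // => i j; rewrite mulrC.
Qed.

(* Part (i): b_V(X, X) = (tr X)^2 + tr (X^2) = 2 (tr X)^2 = 0. *)
Lemma bV_alternating_pchar2 n : bV_alternating K n.
Proof. by move=> X; rewrite /bV mxtrace_sqr_pchar2 -expr2 addrr_pchar2. Qed.

Lemma mxtrace_gamma_pchar2 n (a : K) : \tr (a *: gammaV K n) = a * (odd n)%:R.
Proof. by rewrite mxtraceZ /gammaV mxtrace1 natr_pchar2. Qed.

Lemma perp_gammaP n (X : 'M[K]_n) : in_perp_gamma X <-> (~~ odd n -> \tr X = 0).
Proof.
have bVg c : bV X (c *: gammaV K n) = (~~ odd n)%:R * (c * \tr X).
  by rewrite bV_gamma -mulr_natl natr_pchar2.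
split => [perpX evn | tr0 Y [c ->]].
  by have := perpX _ (ex_intro _ 1 erefl); rewrite bVg evn mul1r mul1r.
by rewrite bVg; case: (odd n) tr0 => [_|->//]; rewrite ?mul0r ?mulr0.
Qed.

Lemma radical_scalar_pchar2 n (X : 'M[K]_n) : in_radical X -> X = \tr X *: gammaV K n.
Proof.
move=> radX; apply/matrixP => i j; rewrite /gammaV !mxE eq_sym.
have /eqP := radX (delta_mx j i).
by rewrite bV_delta addr_eq0 oppr_pchar2 // [j == i]eq_sym => /eqP.
Qed.

Lemma det_involution_pchar2 n (g : 'M[K]_n) : g *m g = 1%:M -> \det g = 1.
Proof.
move=> gg; have detg2 : \det g ^+ 2 = 1 by rewrite expr2 -det_mulmx gg det1.
have /eqP : (\det g + 1) ^+ 2 = 0.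
  by rewrite sqrrD1 detg2 (mulrn_pchar hK) addr0 addrr_pchar2.
by rewrite expf_eq0 /= addr_eq0 oppr_pchar2 // => /eqP.
Qed.

(* In characteristic 2, t(a) t(a) = t(2a) = 1. *)
Lemma transvection_involutive_pchar2 n (a : K) (i j : 'I_n) : i != j ->
  transvection a i j *m transvection a i j = 1%:M.
Proof.
by move=> nij; rewrite transvectionD // addrr_pchar2 // /transvection scale0r addr0.
Qed.

(* Signs disappear in characteristic 2: permutation matrices lie in SL(V). *)
Lemma det_perm_pchar2 n (s : 'S_n) : \det (perm_mx s : 'M[K]_n) = 1.
Proof. by rewrite det_perm oppr_pchar2 // expr1n. Qed.

(* Part (ii): for n even, tr (c 1) = 0 forces the radical to vanish. *)
Lemma bV_nondegenerate_even n : ~~ odd n -> bV_nondegenerate K n.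
Proof.
move=> evn X radX; have X_scalar := radical_scalar_pchar2 radX.
have trX0 : \tr X = 0 by rewrite {1}X_scalar mxtrace_gamma_pchar2 (negbTE evn) mulr0.
by rewrite X_scalar trX0 scale0r.
Qed.

Lemma radical_odd n (X : 'M[K]_n) : odd n -> in_radical X <-> in_span_gamma X.
Proof.
move=> odd_n; split => [radX | [c ->] Y]; first by exists (\tr X); apply: radical_scalar_pchar2.
by rewrite bV_sym bV_gamma -mulr_natl natr_pchar2 /= odd_n mul0r.
Qed.

Lemma ker_psi_perp_even n (X : 'M[K]_n) : ~~ odd n -> psiV X = 0 <-> in_perp_gamma X.
Proof. by move=> evn; rewrite (perp_gammaP X); split => // /(_ evn). Qed.

(* Part (iii): for n odd, tr (c 1) = c, so V (x) V* = Ker psi_V (+) <gamma>. *)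
Lemma ker_psi_span_odd n (X : 'M[K]_n) : odd n -> psiV X = 0 -> in_span_gamma X -> X = 0.
Proof.
by move=> odd_n + [a eX]; rewrite /psiV eX mxtrace_gamma_pchar2 odd_n mulr1 => ->; rewrite scale0r.
Qed.

Lemma ker_psi_add_span_odd n (X : 'M[K]_n) : odd n ->
  exists A B : 'M[K]_n, psiV A = 0 /\ in_span_gamma B /\ X = A + B.
Proof.
move=> odd_n; exists (X - \tr X *: gammaV K n), (\tr X *: gammaV K n).
rewrite /psiV raddfB /= mxtrace_gamma_pchar2 odd_n mulr1 subrr subrK.
by split => //; split => //; exists (\tr X).
Qed.

End Char2.

Section StableSubspace.
Variable K : fieldType.
Hypothesis hK : (2 \in [pchar K])%N.
Variable n : nat.
Variable W : 'M[K]_n -> Prop.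
Hypothesis subW : is_subspace W.
Hypothesis stabW : G_stable W.

Lemma stable0 : W 0. Proof. by case: subW. Qed.

Lemma stableZ a X : W X -> W (a *: X).
Proof. by move=> WX; have := proj2 subW a X 0 WX stable0; rewrite addr0. Qed.

Lemma stableD X Y : W X -> W Y -> W (X + Y).
Proof. by move=> WX WY; have := proj2 subW 1 X Y WX WY; rewrite scale1r. Qed.

Lemma stableB X Y : W X -> W Y -> W (X - Y).
Proof. by move=> WX WY; apply: stableD => //; rewrite -scaleN1r; apply: stableZ. Qed.

Lemma stable_sum (I : finType) (F : I -> 'M[K]_n) :
  (forall i, W (F i)) -> W (\sum_i F i).
Proof. by move=> WF; apply: (big_ind W stable0 stableD) => i _; apply: WF. Qed.

Lemma stable_conj g h X : \det g = 1 -> g *m h = 1%:M -> W X -> W (g *m X *m h).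
Proof. by move=> detg gh WX; have := stabW detg WX; rewrite /actG (invmx_right gh). Qed.

Lemma stable_perm_conj (s : 'S_n) X : W X -> W (\matrix_(k, l) X (s k) (s l)).
Proof.
move=> WX; rewrite -perm_mx_conj; apply: stable_conj => //.
  exact: det_perm_pchar2.
by rewrite -perm_mxM mulgV perm_mx1.
Qed.

(* Transvections are involutions of determinant 1, so W is stable under the
   difference t X t - X of conjugation by t = 1 + a E_ij. *)
Lemma stable_transvection_diff a i j X : i != j -> W X ->
  W (transvection a i j *m X *m transvection a i j - X).
Proof.
move=> nij WX; have tt := transvection_involutive_pchar2 hK a nij.
by apply: stableB => //; apply: stable_conj => //; apply: det_involution_pchar2.
Qed.

(* Comparing the transvections with parameters 1 and c (c <> 0, 1) separates
   the linear and quadratic parts of t X t - X, which both lie in W. *)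
Lemma stable_transvection_parts (c : K) i j X : c != 0 -> c != 1 -> i != j -> W X ->
  W (delta_mx i j *m X + X *m delta_mx i j) /\ W (X j i *: delta_mx i j).
Proof.
move=> c0 c1 nij WX.
have W1 := stable_transvection_diff 1 nij WX.
have Wc := stable_transvection_diff c nij WX.
rewrite transvection_conj scale1r expr1n mul1r in W1.
rewrite transvection_conj in Wc.
set A := delta_mx i j *m X + X *m delta_mx i j in W1 Wc *.
set E := X j i *: delta_mx i j.
have cc2 : c - c ^+ 2 != 0.
  by rewrite expr2 -{1}(mulr1 c) -mulrBr mulf_neq0 // subr_eq0 eq_sym.
have eE : (c - c ^+ 2) *: E =
    c *: (A + E) - (c *: A + (c ^+ 2 * X j i) *: delta_mx i j).
  by rewrite scalerDr opprD addrACA addrN add0r /E !scalerA -scalerBl mulrBl.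
have WE : W E.
  rewrite -(scalerK cc2 E) eE; apply: stableZ.
  by apply: stableB => //; apply: stableZ.
by split => //; have := stableB W1 WE; rewrite addrK.
Qed.

(* One off-diagonal elementary matrix in W brings all of them, via permutations. *)
Lemma stable_delta_all i j : i != j -> W (delta_mx i j) ->
  forall k l, k != l -> W (delta_mx k l).
Proof.
move=> nij WE k l nkl; have [s [sk sl]] := perm_map_pair nkl nij.
have := stable_perm_conj s WE.
have -> // : \matrix_(a, b) (delta_mx i j : 'M[K]_n) (s a) (s b) = delta_mx k l.
by apply/matrixP => a b; rewrite !mxE -sk -sl !(inj_eq (@perm_inj _ _)).
Qed.

(* From E_ij in W, the linear part of the transvection for (j, i) gives
   E_ji E_ij + E_ij E_ji = E_ii + E_jj in W. *)
Lemma stable_delta_diag (c : K) i j : c != 0 -> c != 1 -> i != j ->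
  W (delta_mx i j) -> W (delta_mx i i + delta_mx j j).
Proof.
move=> c0 c1 nij WE; have nji : j != i by rewrite eq_sym.
have [WA _] := stable_transvection_parts c0 c1 nji WE.
by rewrite !mul_delta_mx addrC in WA.
Qed.

(* The trace-zero matrices are spanned by the E_kl (k <> l) and the E_kk + E_k0k0. *)
Lemma stable_trace0 (k0 : 'I_n) : (forall k l, k != l -> W (delta_mx k l)) ->
  (forall k, W (delta_mx k k + delta_mx k0 k0)) ->
  forall Z, \tr Z = 0 -> W Z.
Proof.
move=> Woff Wdiag Z trZ.
have -> : Z = \sum_k \sum_l
    (if k == l then Z k l *: (delta_mx k l + delta_mx k0 k0) else Z k l *: delta_mx k l).
  transitivity (Z + \tr Z *: delta_mx k0 k0); first by rewrite trZ scale0r addr0.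
  rewrite {1}(matrix_sum_delta Z) /mxtrace scaler_suml -big_split; apply: eq_bigr => k _ /=.
  rewrite [RHS](bigD1 k) //= eqxx scalerDr (bigD1 k) //= -!addrA; congr (_ + _).
  rewrite addrC; congr (_ + _); apply: eq_bigr => l nlk.
  by rewrite eq_sym (negbTE nlk).
apply: stable_sum => k; apply: stable_sum => l.
by case: eqP => [<-|/eqP nkl]; apply: stableZ; [apply: Wdiag | apply: Woff].
Qed.

(* A subspace containing <gamma> and all trace-zero matrices contains <gamma>^perp:
   for n even the latter is the trace-zero space, for n odd it is everything. *)
Lemma stable_perp_gamma :
  (forall X, in_span_gamma X -> W X) -> (forall Z, \tr Z = 0 -> W Z) ->
  forall X, in_perp_gamma X -> W X.
Proof.
move=> Wspan Wtr0 X /(perp_gammaP hK) perpX.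
case: (boolP (odd n)) => [odd_n | /perpX]; last exact: Wtr0.
rewrite -(subrK (\tr X *: gammaV K n) X); apply: stableD; last by apply: Wspan; exists (\tr X).
by apply: Wtr0; rewrite raddfB /= mxtrace_gamma_pchar2 // odd_n mulr1 subrr.
Qed.

(* A matrix of W outside <gamma> yields an off-diagonal elementary matrix in W:
   either X has a nonzero off-diagonal entry X_ji, giving X_ji E_ij, or X is
   diagonal with X_ii <> X_k0k0, giving (X_ii + X_k0k0) E_ik0. *)
Lemma stable_offdiag_delta (c : K) (k0 : 'I_n) X : c != 0 -> c != 1 ->
  W X -> ~ in_span_gamma X -> exists i j, i != j /\ W (delta_mx i j).
Proof.
move=> c0 c1 WX nspanX.
case: (pickP (fun p : 'I_n * 'I_n => (p.1 != p.2) && (X p.2 p.1 != 0))).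
  move=> [i j] /andP [/= nij nz]; exists i, j; split => //.
  have [_ /(stableZ (X j i)^-1)] := stable_transvection_parts c0 c1 nij WX.
  by rewrite scalerA mulVf // scale1r.
move=> offX; have {}offX i j : i != j -> X j i = 0.
  by move=> nij; have := offX (i, j); rewrite /= nij /= => /negbFE /eqP.
case: (pickP (fun i => X i i != X k0 k0)) => [i /= ni | diagX]; last first.
  case: nspanX; exists (X k0 k0); apply/matrixP => a b; rewrite /gammaV !mxE.
  case: (eqVneq a b) => [<-|nab]; last by rewrite offX 1?eq_sym // mulr0.
  by have /negbFE/eqP := diagX a; rewrite mulr1.
have nik : i != k0 by apply: contraNneq ni => ->.
exists i, k0; split => //.
have [WA _] := stable_transvection_parts c0 c1 nik WX.
have eA : delta_mx i k0 *m X + X *m delta_mx i k0 = (X k0 k0 + X i i) *: delta_mx i k0.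
  apply/matrixP => a b; rewrite [LHS]mxE mul_delta_mxE mul_mx_deltaE !mxE.
  case: (eqVneq a i) => [->|nai]; case: (eqVneq b k0) => [->|nbk];
    by rewrite ?mulr1 ?mul1r ?mulr0 ?mul0r ?addr0 ?add0r // offX // eq_sym.
have nz : X k0 k0 + X i i != 0 by rewrite -(oppr_pchar2 hK (X k0 k0)) addrC subr_eq0.
by have := stableZ (X k0 k0 + X i i)^-1 WA; rewrite eA scalerA mulVf // scale1r.
Qed.

Lemma stable_dichotomy (c : K) (k0 : 'I_n) : c != 0 -> c != 1 ->
  (forall X, in_span_gamma X -> W X) ->
  (forall X, W X -> in_span_gamma X) \/ (forall X, in_perp_gamma X -> W X).
Proof.
move=> c0 c1 Wspan.
have [Wsub|notsub] := classic (forall X, W X -> in_span_gamma X); [by left | right].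
have [X notX] := not_all_ex_not _ _ notsub.
have [WX nspanX] := imply_to_and _ _ notX.
have [i [j [nij WE]]] := stable_offdiag_delta k0 c0 c1 WX nspanX.
have Woff := stable_delta_all nij WE.
apply: stable_perp_gamma => //; apply: (stable_trace0 (k0 := k0)) => // k.
have [->|nk] := eqVneq k k0; last exact: stable_delta_diag c0 c1 nk (Woff _ _ nk).
by rewrite -mulr2n -scaler_nat (pcharf0 hK) scale0r; apply: stable0.
Qed.

End StableSubspace.

(* An algebraically closed field has an element other than 0 and 1: any root of
   x^2 = x + 1 will do. *)
Lemma closed_field_nontrivial_elt (K : closedFieldType) : exists c : K, c != 0 /\ c != 1.
Proof.
have [x] := @solve_monicpoly K 2 (fun _ => 1) isT.
rewrite !big_ord_recr big_ord0 /= !mul1r add0r expr0 expr1 => x2.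
exists x; split; apply/eqP => ex; move: x2; rewrite ex.
  by rewrite expr0n /= addr0 => /eqP; rewrite eq_sym oner_eq0.
by rewrite expr1n -{1}[1]add0r => /addIr /eqP; rewrite eq_sym oner_eq0.
Qed.

Section HighestWeight.
Variables (K : fieldType) (n : nat).
Local Notation E := (delta_mx ord0 ord_max : 'M[K]_n.+1).

Lemma upper_unitriangular_det (u : 'M[K]_n.+1) : upper_unitriangular u -> \det u = 1.
Proof.
move=> [lower0 diag1]; rewrite -det_tr det_trig; first by apply: big1 => i _; rewrite mxE.
apply/forallP => i; apply/forallP => j; apply/implyP => lij.
by rewrite mxE lower0.
Qed.

(* Column 0 and row n of an upper unitriangular u are standard basis vectors, so
   u E = E = E u for the corner matrix E = E_0n. *)
Lemma upper_unitriangular_fixes_corner (u : 'M[K]_n.+1) :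
  upper_unitriangular u -> actG u E = E.
Proof.
move=> uu; have [lower0 diag1] := uu.
have uE : u *m E = E.
  apply/matrixP => k l; rewrite mul_mx_deltaE !mxE.
  have [->|nk] := eqVneq k ord0; first by rewrite diag1 mul1r.
  by rewrite lower0 ?mul0r // lt0n; apply: contra nk => /eqP k0; apply/eqP/val_inj.
have Eu : E *m u = E.
  apply/matrixP => k l; rewrite mul_delta_mxE !mxE.
  have [->|nl] := eqVneq l ord_max; first by rewrite diag1 mulr1 andbT.
  rewrite lower0 ?mulr0 ?andbF //.
  by rewrite ltn_neqAle -ltnS ltn_ord andbT; apply: contra nl => /eqP/val_inj ->.
have unit_u : u \in unitmx by rewrite unitmxE upper_unitriangular_det // unitr1.
by rewrite /actG uE -{1}Eu -mulmxA mulmxV // mulmx1.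
Qed.

Lemma diag_conj_delta (d : 'I_n.+1 -> K) i j : (forall k, d k != 0) ->
  actG (diag_mx (\row_k d k)) (delta_mx i j) = (d i / d j) *: delta_mx i j.
Proof.
move=> dnz; have inv_diag : diag_mx (\row_k d k) *m diag_mx (\row_k (d k)^-1) = 1%:M.
  apply/matrixP => k l; rewrite mul_diag_mx !mxE.
  by have [->|_] := eqVneq k l; rewrite ?mulr1n ?mulr0n ?mulr0 ?mulfV.
rewrite /actG (invmx_right inv_diag); apply/matrixP => k l.
rewrite mul_mx_diag mul_diag_mx !mxE.
by have [->|] := eqVneq k i; have [->|] := eqVneq l j; rewrite ?mulr1 ?mulr0 ?mul0r.
Qed.

End HighestWeight.

Lemma corner_perp_gamma (K : fieldType) n :
  in_perp_gamma (delta_mx ord0 ord_max : 'M[K]_n.+2).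
Proof. by move=> Y [c ->]; rewrite bV_gamma mxtrace_delta mulr0 mul0rn. Qed.

Lemma corner_not_span (K : fieldType) n :
  ~ in_span_gamma (delta_mx ord0 ord_max : 'M[K]_n.+2).
Proof.
move=> [a /matrixP /(_ ord0 ord_max) /eqP]; rewrite !mxE /= mulr0.
by rewrite eqxx oner_eq0.
Qed.

Lemma quotient_highest_weight (K : fieldType) n : quotient_highest_weight_w1_wn1 K n.+2.
Proof.
exists (delta_mx ord0 ord_max); split; first exact: corner_perp_gamma.
split; first exact: corner_not_span.
split=> [u uu | d prod_d i0 iN i0_0 iN_n].
  by exists 0; rewrite upper_unitriangular_fixes_corner // subrr scale0r.
have -> : i0 = ord0 by apply: val_inj.
have -> : iN = ord_max by apply: val_inj.
have dnz k : d k != 0.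
  by apply: contra_eq_neq prod_d => dk0; rewrite (bigD1 k) //= dk0 mul0r eq_sym oner_eq0.
by exists 0; rewrite diag_conj_delta // subrr scale0r.
Qed.

Lemma quotient_irreducible_pchar2 (K : closedFieldType) (hK : (2 \in [pchar K])%N) n :
  quotient_irreducible K n.+2.
Proof.
have [c [c0 c1]] := closed_field_nontrivial_elt K.
split.
  by exists (delta_mx ord0 ord_max); split; [apply: corner_perp_gamma | apply: corner_not_span].
by move=> W subW stabW Wspan _; apply: (stable_dichotomy hK subW stabW ord0 c0 c1).
Qed.

Theorem lemma8p1 (K : closedFieldType) (hK : (2 \in [pchar K])%N)
  (n : nat) (hn : (2 <= n)%N) :
  (* (i) *)
  bV_alternating K n /\
  (* (ii) *)
  (~~ odd n ->
     bV_nondegenerate K n /\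
     (forall X : 'M[K]_n, psiV X = 0 <-> in_perp_gamma X)) /\
  (* (iii) *)
  (odd n ->
     (forall X : 'M[K]_n, in_radical X <-> in_span_gamma X) /\
     (forall X : 'M[K]_n, psiV X = 0 -> in_span_gamma X -> X = 0) /\
     (forall X : 'M[K]_n, exists A B : 'M[K]_n,
        psiV A = 0 /\ in_span_gamma B /\ X = A + B)) /\
  (* (iv) *)
  quotient_iso_L_w1_wn1 K n.
Proof.
case: n hn => [|[|m]] // _.
split; first exact: bV_alternating_pchar2.
split.
  by move=> evn; split; [apply: bV_nondegenerate_even | move=> X; apply: ker_psi_perp_even].
split.
  move=> odd_n; split; first by move=> X; apply: radical_odd.
  by split=> X; [apply: ker_psi_span_odd | apply: ker_psi_add_span_odd].
by split; [apply: quotient_irreducible_pchar2 | apply: quotient_highest_weight].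
Qed.
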